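(* Let $\mu$ be a locally finite positive Borel measure on $\mathbb{R}$ and let $I$ be a dyadic interval with left and right halves $I_{\mathrm{left}},I_{\mathrm{right}}$. For an interval $J$ let \[ \boldsymbol{M}_{J}=\begin{bmatrix}\int_J d\mu&\int_J x\,d\mu\\ \int_J x\,d\mu&\int_J x^2d\mu\end{bmatrix}. \] (1) If $\mu(I_{\mathrm{left}})>0$ and $\mu(I_{\mathrm{right}})>0$, and $\boldsymbol{M}_{I_{\mathrm{left}}}$ is positive definite while $\det\boldsymbol{M}_{I_{\mathrm{right}}}=0$, then $L_{I;2}^{2}(\mu)$ is one-dimensional (so there is exactly one nonzero Alpert function $a_I^{\mu,1}=a_I^{\mu,2}\neq0$ up to sign); the same conclusion holds when the roles of $I_{\mathrm{left}}$ and $I_{\mathrm{right}}$ are interchanged. (2) In all other cases in which at least one of $\boldsymbol{M}_{I_{\mathrm{left}}}$, $\boldsymbol{M}_{I_{\mathrm{right}}}$ fails to be positive definite, $L_{I;2}^{2}(\mu)=\{0\}$ in $L^2(\mu)$ (i.e. $a_I^{\mu,1}=a_I^{\mu,2}=0$).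
   Context: $L_{I;2}^{2}(\mu)$ is the subspace of $L^{2}(\mu)$ of functions $f=(\alpha_1x+\alpha_0)\mathbf{1}_{I_{\mathrm{left}}}+(\beta_1x+\beta_0)\mathbf{1}_{I_{\mathrm{right}}}$ with real coefficients such that $\int f\,d\mu=\int f(x)x\,d\mu(x)=0$. The Alpert functions $a_I^{\mu,1},a_I^{\mu,2}$ are an orthonormal (in $L^2(\mu)$) family spanning $L^2_{I;2}(\mu)$, with vanishing functions discarded. *)

From HB Require Import structures.
From mathcomp Require Import all_boot all_order all_algebra.
From mathcomp Require Import all_classical all_reals all_analysis.
Set Implicit Arguments. Unset Strict Implicit. Unset Printing Implicit Defensive.
Import Order.TTheory GRing.Theory Num.Theory.
Local Open Scope classical_set_scope.
Local Open Scope ring_scope.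

Definition locally_finite (R : realType)
  (mu : {measure set (measurableTypeR R) -> \bar R}) : Prop :=
  forall a b : R, (mu `[a, b]%classic < +oo)%E.

Definition dyL (R : realType) (n k : int) : R := k%:~R * (2 : R) ^ (- n).
Definition dyM (R : realType) (n k : int) : R := (k%:~R + 2^-1) * (2 : R) ^ (- n).
Definition dyR (R : realType) (n k : int) : R := (k + 1)%:~R * (2 : R) ^ (- n).
Definition Ileft (R : realType) (n k : int) : set R := `[@dyL R n k, @dyM R n k[%classic.
Definition Iright (R : realType) (n k : int) : set R := `[@dyM R n k, @dyR R n k[%classic.







Definition Mmat (R : realType) (mu : {measure set (measurableTypeR R) -> \bar R})
  (J : set R) : 'M[R]_2 :=
  \matrix_(i < 2, j < 2) Rintegral mu J (fun x : R => x ^+ (i + j)).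

Definition posdef (R : realType) (M : 'M[R]_2) : Prop :=
  forall v : 'cV[R]_2, v != 0 -> 0 < (v^T *m M *m v) 0 0.

(* Membership in L^2_{I;2}(mu) (as functions; the L^2 class is taken mod mu-a.e.). *)
Definition L2I2 (R : realType) (mu : {measure set (measurableTypeR R) -> \bar R})
  (n k : int) (f : R -> R) : Prop :=
  (exists a1 a0 b1 b0 : R,
      f = fun x => (a1 * x + a0) * indic (@Ileft R n k) x
                 + (b1 * x + b0) * indic (@Iright R n k) x)
  /\ (\int[mu]_x (f x)%:E = 0)%E
  /\ (\int[mu]_x (f x * x)%:E = 0)%E.

Definition L2I2_dim1 (R : realType) (mu : {measure set (measurableTypeR R) -> \bar R})
  (n k : int) : Prop :=
  exists g : R -> R, L2I2 mu n k g
    /\ ~ {ae mu, forall x, g x = 0}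
    /\ forall f, L2I2 mu n k f -> exists c : R, {ae mu, forall x, f x = c * g x}.

Definition L2I2_zero (R : realType) (mu : {measure set (measurableTypeR R) -> \bar R})
  (n k : int) : Prop :=
  forall f, L2I2 mu n k f -> {ae mu, forall x, f x = 0}.

Definition case1 (R : realType) (mu : {measure set (measurableTypeR R) -> \bar R})
  (n k : int) : Prop :=
  (0 < mu (@Ileft R n k))%E /\ (0 < mu (@Iright R n k))%E /\
  ((posdef (Mmat mu (@Ileft R n k)) /\ \det (Mmat mu (@Iright R n k)) = 0)
   \/ (posdef (Mmat mu (@Iright R n k)) /\ \det (Mmat mu (@Ileft R n k)) = 0)).

(* The two moment conditions and
   ||f||^2 only involve the moments m_j = int_J x^j dmu (j <= 2) of the halves:
   with a = (a0, a1) and b = (b0, b1) the conditions read M_L a + M_R b = 0 and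
   ||f||^2 = a^T M_L a + b^T M_R b, so everything is 2x2 linear algebra with
   positive semidefinite M_L, M_R.  A half of mass 0 contributes nothing.  A
   singular M_J of positive mass has rank one, with kernel orthogonal to
   (1, mean of J), and the mean of I_left lies strictly below the midpoint of I,
   that of I_right at or above it.  If M_L is invertible and M_R has rank one, the
   admissible f form a line modulo null functions, spanned by the f with b = (1, 0);
   if both have rank one, the distinct means force both quadratic forms to vanish. *)

From HB Require Import structures.
From mathcomp Require Import all_boot all_order all_algebra.
From mathcomp Require Import all_classical all_reals all_analysis.
From mathcomp Require Import measurable_realfun.
From mathcomp Require Import ring lra.
Set Implicit Arguments. Unset Strict Implicit. Unset Printing Implicit Defensive.
Import Order.TTheory GRing.Theory Num.Theory.
Local Open Scope classical_set_scope.
Local Open Scope ring_scope.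

Section QuadraticForm.
Variable R : realFieldType.
Implicit Types (a b : R).

Definition qform (m0 m1 m2 a b : R) := a * a * m0 + 2 * a * b * m1 + b * b * m2.
Definition qdet (m0 m1 m2 : R) := m0 * m2 - m1 * m1.

Lemma mul_qform (m0 m1 m2 : R) a b :
  m0 * qform m0 m1 m2 a b = (a * m0 + b * m1) ^+ 2 + b ^+ 2 * qdet m0 m1 m2.
Proof. by rewrite /qform /qdet; ring. Qed.

Lemma mul_qform_adj (m0 m1 m2 : R) :
  m0 * qform m0 m1 m2 (- m1) m0 = m0 ^+ 2 * qdet m0 m1 m2.
Proof. by rewrite /qform /qdet; ring. Qed.

Lemma qform_pdP (m0 m1 m2 : R) :
  (forall a b, (a != 0) || (b != 0) -> 0 < qform m0 m1 m2 a b)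
  <-> 0 < m0 /\ 0 < qdet m0 m1 m2.
Proof.
split=> [pd | [m0_gt0 det_gt0] a b ab].
  have m0_gt0 : 0 < m0.
    by have := pd 1 0; rewrite oner_neq0 /qform => /(_ isT); lra.
  split=> //; have := pd (- m1) m0; rewrite (lt0r_neq0 m0_gt0) orbT.
  by rewrite -(pmulr_rgt0 _ m0_gt0) mul_qform_adj pmulr_rgt0 ?exprn_gt0 // => ->.
rewrite -(pmulr_rgt0 _ m0_gt0) mul_qform.
have [b0 | b_neq0] := eqVneq b 0.
  move: ab; rewrite b0 eqxx orbF => a_neq0.
  by rewrite expr0n mul0r addr0 mul0r addr0 exprn_even_gt0 // mulf_neq0 // lt0r_neq0.
by rewrite ltr_wpDl ?sqr_ge0 // mulr_gt0 // exprn_even_gt0.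
Qed.

Lemma qdet_ge0 (m0 m1 m2 : R) : 0 < m0 ->
  (forall a b, 0 <= qform m0 m1 m2 a b) -> 0 <= qdet m0 m1 m2.
Proof.
move=> m0_gt0 psd; have := psd (- m1) m0.
by rewrite -(pmulr_rge0 _ m0_gt0) mul_qform_adj pmulr_rge0 // exprn_gt0.
Qed.

Lemma qform_kernel0 (m0 m1 m2 : R) a b : qdet m0 m1 m2 != 0 ->
  a * m0 + b * m1 = 0 -> a * m1 + b * m2 = 0 -> a = 0 /\ b = 0.
Proof.
move=> det_neq0 e1 e2; split; apply: (mulIf det_neq0); rewrite mul0r.
  by transitivity (m2 * (a * m0 + b * m1) - m1 * (a * m1 + b * m2));
    [rewrite /qdet; ring | rewrite e1 e2; ring].
by transitivity (m0 * (a * m1 + b * m2) - m1 * (a * m0 + b * m1));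
  [rewrite /qdet; ring | rewrite e1 e2; ring].
Qed.

(* A singular form with m0 > 0 is m0^-1 (a m0 + b m1)^2: its kernel is one line. *)
Lemma qform_rank1 (m0 m1 m2 : R) a b : 0 < m0 -> qdet m0 m1 m2 = 0 ->
  a * m0 + b * m1 = 0 -> a * m1 + b * m2 = 0 /\ qform m0 m1 m2 a b = 0.
Proof.
move=> m0_gt0 det0 e1; have m0_neq0 := lt0r_neq0 m0_gt0.
split; apply: (mulfI m0_neq0); rewrite mulr0; last by rewrite mul_qform e1 det0; ring.
transitivity (m1 * (a * m0 + b * m1) + b * qdet m0 m1 m2); first by rewrite /qdet; ring.
by rewrite e1 det0; ring.
Qed.

End QuadraticForm.

Section TwoBlocks.
Variable R : realFieldType.
Variables l0 l1 l2 r0 r1 r2 : R.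

(* With l_j, r_j the moments of mu on the two halves, [orth_lin a0 a1 b0 b1]
   says that (a1 x + a0) 1_L + (b1 x + b0) 1_R is orthogonal to 1 and x, and
   [qsum a0 a1 b0 b1] is its squared L^2 norm. *)
Definition orth_lin (a0 a1 b0 b1 : R) : Prop :=
  a0 * l0 + a1 * l1 + b0 * r0 + b1 * r1 = 0 /\
  a0 * l1 + a1 * l2 + b0 * r1 + b1 * r2 = 0.

Definition qsum (a0 a1 b0 b1 : R) :=
  qform l0 l1 l2 a0 a1 + qform r0 r1 r2 b0 b1.

Lemma orth_linB (c a0 a1 b0 b1 g0 g1 h0 h1 : R) :
  orth_lin a0 a1 b0 b1 -> orth_lin g0 g1 h0 h1 ->
  orth_lin (a0 - c * g0) (a1 - c * g1) (b0 - c * h0) (b1 - c * h1).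
Proof.
move=> [e1 e2] [f1 f2]; split.
  transitivity (a0 * l0 + a1 * l1 + b0 * r0 + b1 * r1
                - c * (g0 * l0 + g1 * l1 + h0 * r0 + h1 * r1)); first by ring.
  by rewrite e1 f1; ring.
transitivity (a0 * l1 + a1 * l2 + b0 * r1 + b1 * r2
              - c * (g0 * l1 + g1 * l2 + h0 * r1 + h1 * r2)); first by ring.
by rewrite e2 f2; ring.
Qed.

Section NondegenerateLeft.
Hypotheses (detl_neq0 : qdet l0 l1 l2 != 0) (r0_gt0 : 0 < r0) (detr0 : qdet r0 r1 r2 = 0).

Lemma orth_rank1_right (a0 a1 b0 b1 : R) : orth_lin a0 a1 b0 b1 ->
  b0 * r0 + b1 * r1 = 0 -> qsum a0 a1 b0 b1 = 0.
Proof.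
move=> [e1 e2] t0; have [t1 qr0] := qform_rank1 r0_gt0 detr0 t0.
have [-> ->] : a0 = 0 /\ a1 = 0 by apply: (qform_kernel0 detl_neq0); lra.
by rewrite /qsum qr0 /qform; ring.
Qed.

(* g solves M_l g = -(r0, r1) by Cramer's rule.  The right block sees an element
   only through b0 r0 + b1 r1, so subtracting that multiple of the generator
   (g, (1, 0)) leaves a null element. *)
Lemma orth_span_rank1_right : exists g0 g1, orth_lin g0 g1 1 0 /\
  forall a0 a1 b0 b1, orth_lin a0 a1 b0 b1 -> exists c,
    qsum (a0 - c * g0) (a1 - c * g1) (b0 - c * 1) (b1 - c * 0) = 0.
Proof.
move: detl_neq0; rewrite /qdet => d_neq0.
exists (- (l2 * r0 - l1 * r1) / (l0 * l2 - l1 * l1)).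
exists ((l1 * r0 - l0 * r1) / (l0 * l2 - l1 * l1)).
split=> [|a0 a1 b0 b1 orth_ab]; first by split; field.
exists ((b0 * r0 + b1 * r1) / r0); apply: orth_rank1_right.
  by apply: orth_linB => //; split; field.
by field; apply: lt0r_neq0.
Qed.

End NondegenerateLeft.

(* For rank-one blocks with distinct means l1/l0 < r1/r0 the two constraints
   force a0 l0 + a1 l1 = b0 r0 + b1 r1 = 0. *)
Lemma orth_rank1_both (a0 a1 b0 b1 : R) : 0 < l0 -> 0 < r0 ->
  qdet l0 l1 l2 = 0 -> qdet r0 r1 r2 = 0 -> l1 * r0 < r1 * l0 ->
  orth_lin a0 a1 b0 b1 -> qsum a0 a1 b0 b1 = 0.
Proof.
move=> l0_gt0 r0_gt0 detl0 detr0 means [e1 e2].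
set s := a0 * l0 + a1 * l1; set t := b0 * r0 + b1 * r1.
have t_opp : t = - s by rewrite /s /t; lra.
have key : r0 * l1 * s + l0 * r1 * t = 0.
  transitivity (l0 * r0 * (a0 * l1 + a1 * l2 + b0 * r1 + b1 * r2)
                - r0 * a1 * qdet l0 l1 l2 - l0 * b1 * qdet r0 r1 r2).
    by rewrite /s /t /qdet; ring.
  by rewrite e2 detl0 detr0; ring.
have : s * (l1 * r0 - r1 * l0) = 0 by rewrite -key t_opp; ring.
move/eqP; rewrite mulf_eq0 subr_eq0 (lt_eqF means) orbF => /eqP s0.
have t0 : t = 0 by rewrite t_opp s0 oppr0.
by rewrite /qsum (qform_rank1 l0_gt0 detl0 s0).2 (qform_rank1 r0_gt0 detr0 t0).2 addr0.
Qed.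

End TwoBlocks.

Lemma orth_linC (R : realFieldType) (l0 l1 l2 r0 r1 r2 a0 a1 b0 b1 : R) :
  orth_lin l0 l1 l2 r0 r1 r2 a0 a1 b0 b1 <-> orth_lin r0 r1 r2 l0 l1 l2 b0 b1 a0 a1.
Proof. by rewrite /orth_lin; split=> -[e1 e2]; split; lra. Qed.

Lemma orth_null_left (R : realFieldType) (r0 r1 r2 a0 a1 b0 b1 : R) :
  orth_lin 0 0 0 r0 r1 r2 a0 a1 b0 b1 -> qsum 0 0 0 r0 r1 r2 a0 a1 b0 b1 = 0.
Proof.
move=> [e1 e2]; transitivity (b0 * (a0 * 0 + a1 * 0 + b0 * r0 + b1 * r1)
                            + b1 * (a0 * 0 + a1 * 0 + b0 * r1 + b1 * r2)).
  by rewrite /qsum /qform; ring.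
by rewrite e1 e2; ring.
Qed.

Lemma det_mx2 (R : comNzRingType) (A : 'M[R]_2) :
  \det A = A 0 0 * A 1 1 - A 0 1 * A 1 0.
Proof.
rewrite (expand_det_row _ 0) !big_ord_recr big_ord0 /= /cofactor !det_mx11 !mxE /=.
have -> : widen_ord (leqnSn 1) ord_max = 0 :> 'I_2 by apply/val_inj.
have -> : lift 0 0 = 1 :> 'I_2 by apply/val_inj.
have -> : lift ord_max 0 = 0 :> 'I_2 by apply/val_inj.
have -> : ord_max = 1 :> 'I_2 by apply/val_inj.
by rewrite expr0 expr1; ring.
Qed.

Lemma cV2_eq0 (R : nzRingType) (v : 'cV[R]_2) :
  (v == 0) = (v 0 0 == 0) && (v 1 0 == 0).
Proof.
apply/eqP/andP => [-> | [/eqP v0 /eqP v1]]; first by rewrite !mxE.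
apply/matrixP => i j; rewrite (ord1 j) mxE.
by case: i => -[|[|//]] lti; [rewrite -v0 | rewrite -v1]; congr (v _ _); apply/val_inj.
Qed.

Lemma mx2_qform (R : realFieldType) (A : 'M[R]_2) (v : 'cV[R]_2) : A 0 1 = A 1 0 ->
  (v^T *m A *m v) 0 0 = qform (A 0 0) (A 0 1) (A 1 1) (v 0 0) (v 1 0).
Proof.
move=> symA; rewrite !mxE !big_ord_recr !big_ord0 /= !mxE !big_ord_recr !big_ord0 /= !mxE.
have -> : widen_ord (leqnSn 1) ord_max = 0 :> 'I_2 by apply/val_inj.
have -> : ord_max = 1 :> 'I_2 by apply/val_inj.
by rewrite /qform -symA; ring.
Qed.

Lemma posdef_mx2P (R : realType) (A : 'M[R]_2) : A 0 1 = A 1 0 ->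
  posdef A <-> 0 < A 0 0 /\ 0 < \det A.
Proof.
move=> symA; rewrite det_mx2 -symA -[_ - _]/(qdet _ _ _) -qform_pdP.
split=> [pd a b ab | pd v].
  have := pd (\col_i (if i == 0 then a else b)); rewrite mx2_qform // !mxE /=.
  by apply; rewrite cV2_eq0 !mxE /= negb_and.
by rewrite cV2_eq0 negb_and mx2_qform // => /pd.
Qed.

Section IndicatorProducts.
Variables (T : Type) (R : realDomainType) (A : set T) (x : T) (y : R).

Lemma mul_indic_ge0 : (A x -> 0 <= y) -> 0 <= y * \1_A x.
Proof.
rewrite indicE; case: (boolP (x \in A)) => [/set_mem Ax /(_ Ax) | _ _].
  by rewrite mulr1.
by rewrite mulr0.
Qed.

Lemma mul_indic_eq0 : (A x -> y != 0) -> y * \1_A x = 0 -> \1_A x = 0 :> R.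
Proof.
rewrite indicE; case: (boolP (x \in A)) => [/set_mem Ax /(_ Ax) | //].
by rewrite mulr1 => /eqP.
Qed.

End IndicatorProducts.

Section IntegralValue.
Variables (R : realType) (mu : {measure set (measurableTypeR R) -> \bar R}).

(* Plain [filterS] fails here: instance search does not find the a.e. filter. *)
Lemma ae_filterS (P Q : R -> Prop) : (forall x, P x -> Q x) ->
  {ae mu, forall x, P x} -> {ae mu, forall x, Q x}.
Proof. exact: (@filterS _ _ (ae_filter_ringOfSetsType mu)). Qed.

Definition is_integral (f : R -> R) (v : R) : Prop :=
  mu.-integrable setT (EFin \o f) /\ (\int[mu]_x (f x)%:E = v%:E)%E.

Lemma is_integral0 : is_integral (fun=> 0) 0.
Proof.
split; last by rewrite integral0.
apply/integrableP; split; first exact: measurable_cst.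
by rewrite /= normr0 integral0.
Qed.

Lemma is_integral_comb (c : R) f g v w : is_integral f v -> is_integral g w ->
  is_integral (fun x => c * f x + g x) (c * v + w).
Proof.
move=> [intf intfE] [intg intgE].
have intcf : mu.-integrable setT (fun x => c%:E * (EFin \o f) x)%E.
  exact: integrableZl.
rewrite /is_integral.
have -> : EFin \o (fun x => c * f x + g x)
          = (fun x => c%:E * (EFin \o f) x + (EFin \o g) x)%E.
  by apply/funext => x /=; rewrite EFinD EFinM.
split; first exact: integrableD.
by rewrite (integralD measurableT intcf intg) /= integralZl //= intfE intgE -EFinM -EFinD.
Qed.

Lemma is_integral_congr f g v w : is_integral f v -> f =1 g -> v = w ->
  is_integral g w.
Proof. by move=> intf /funext <- <-. Qed.

Lemma is_integral_ge0 f v : is_integral f v -> (forall x, 0 <= f x) -> 0 <= v.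
Proof.
move=> [_ intfE] f_ge0; rewrite -lee_fin -intfE.
by apply: integral_ge0 => x _; rewrite lee_fin.
Qed.

Lemma is_integral_ae0 f v : is_integral f v -> {ae mu, forall x, f x = 0} -> v = 0.
Proof.
move=> [intf intfE] f_ae0.
have : (\int[mu]_x (f x)%:E = \int[mu]_x (cst 0%E) x)%E.
  apply: ae_eq_integral => //; first exact: measurable_int intf.
  by apply: ae_filterS f_ae0 => x /= ->.
by rewrite intfE integral0 => -[].
Qed.

Lemma is_integral0_ae f : is_integral f 0 -> (forall x, 0 <= f x) ->
  {ae mu, forall x, f x = 0}.
Proof.
move=> [intf intfE] f_ge0.
have : ae_eq mu setT (EFin \o f) (cst 0%E).
  apply/(ae_eq_integral_abs mu measurableT (measurable_int mu intf)).
  rewrite -[RHS]intfE; apply: eq_integral => x _ /=.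
  by rewrite /abse ger0_norm.
by apply: ae_filterS => x /(_ I) [].
Qed.

Definition moment (J : set R) (j : nat) : R := Rintegral mu J (fun x => x ^+ j).

Lemma Mmat_moment (J : set R) (i j : 'I_2) : Mmat mu J i j = moment J (i + j).
Proof. by rewrite mxE. Qed.

Lemma moment0_ge0 (J : set R) : 0 <= moment J 0.
Proof. by apply: Rintegral_ge0 => x _; rewrite expr0. Qed.

Lemma det_Mmat (J : set R) :
  \det (Mmat mu J) = qdet (moment J 0) (moment J 1) (moment J 2).
Proof. by rewrite det_mx2 !Mmat_moment. Qed.

Lemma posdef_MmatP (J : set R) : posdef (Mmat mu J) <->
  0 < moment J 0 /\ 0 < qdet (moment J 0) (moment J 1) (moment J 2).
Proof.
(* [det_Mmat] must be restated here: [posdef_mx2P] yields the determinant over a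
   convertible but syntactically different ring instance. *)
have detE : \det (Mmat mu J) = qdet (moment J 0) (moment J 1) (moment J 2).
  exact: det_Mmat.
by rewrite posdef_mx2P ?Mmat_moment // detE.
Qed.

Hypothesis mu_lf : locally_finite mu.

Section HalfOpenInterval.
Variables c e : R.
Local Notation J := `[c, e[%classic.

Lemma measure_itv_lty : (mu J < +oo)%E.
Proof.
apply: le_lt_trans (mu_lf c e).
apply: le_measure; rewrite ?inE; try exact: measurable_itv.
by move=> x /=; rewrite !in_itv /= => /andP[-> /ltW ->].
Qed.

Lemma integrable_monomial_itv j : mu.-integrable J (EFin \o (fun x => x ^+ j)).
Proof.
pose B := `|c| + `|e|.
have B_ge0 : 0 <= B ^+ j by rewrite exprn_ge0 ?addr_ge0.
apply: (@le_integrable _ _ _ mu J (measurable_itv _) _ (cst (B ^+ j)%:E)%E).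
- by apply/measurable_EFinP; apply: measurable_funX; exact: measurable_id.
- move=> x /=; rewrite in_itv /= => /andP[cx xe].
  rewrite lee_fin (ger0_norm B_ge0) normrX lerXn2r ?nnegrE ?addr_ge0 //.
  have := ler_norm (- c); have := ler_norm e; have := normr_ge0 c; have := normr_ge0 e.
  by rewrite normrN => *; apply/ler_normlP; split; rewrite /B; lra.
- apply/integrableP; split; first exact: measurable_cst.
  by rewrite integral_cst ?lte_mul_pinfty ?measure_itv_lty //; exact: measurable_itv.
Qed.

Lemma is_integral_monomial j :
  is_integral (fun x => x ^+ j * \1_J x) (moment J j).
Proof.
have mJ : measurable J by exact: measurable_itv.
have intJ := integrable_monomial_itv j.
have restrictE x : ((EFin \o (fun x => x ^+ j)) \_ J) x = (x ^+ j * \1_J x)%:E.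
  by rewrite patchE indicE; case: (x \in J); rewrite ?mulr1 ?mulr0.
split.
  have := (@integrable_mkcond _ _ _ mu J _ mJ).1 intJ.
  by apply: eq_integrable => // x _; rewrite restrictE.
transitivity (\int[mu]_(x in J) (x ^+ j)%:E)%E.
  by rewrite [RHS]integral_mkcond; apply: eq_integral => x _; rewrite restrictE.
by rewrite /moment /Rintegral fineK //; exact: integrable_fin_num.
Qed.

Lemma is_integral_quadratic p0 p1 p2 :
  is_integral (fun x => (p0 + p1 * x + p2 * x ^+ 2) * \1_J x)
    (p0 * moment J 0 + p1 * moment J 1 + p2 * moment J 2).
Proof.
apply: is_integral_congr (is_integral_comb p0 (is_integral_monomial 0)
  (is_integral_comb p1 (is_integral_monomial 1)
  (is_integral_comb p2 (is_integral_monomial 2) is_integral0))) _ _.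
  by move=> x; rewrite expr0 expr1; ring.
by ring.
Qed.

Lemma moment0E : moment J 0 = fine (mu J).
Proof.
rewrite /moment (@eq_Rintegral _ _ _ mu _ (fun _ => 1)); last first.
  by move=> x _; rewrite expr0.
by rewrite Rintegral_cst ?mul1r //; exact: measurable_itv.
Qed.

Lemma moment0_gt0 : (0 < mu J)%E <-> 0 < moment J 0.
Proof.
rewrite moment0E; split => [muJ_gt0 | fine_gt0].
  by apply: fine_gt0; rewrite muJ_gt0 measure_itv_lty.
rewrite lt0e measure_ge0 andbT; apply: contraTneq fine_gt0 => ->.
by rewrite ltxx.
Qed.

Lemma qform_moment_ge0 a b :
  0 <= qform (moment J 0) (moment J 1) (moment J 2) a b.
Proof.
have := is_integral_ge0 (is_integral_quadratic (a * a) (2 * a * b) (b * b)).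
have -> : (a * a) * moment J 0 + (2 * a * b) * moment J 1 + (b * b) * moment J 2
    = qform (moment J 0) (moment J 1) (moment J 2) a b by rewrite /qform; ring.
apply=> x; apply: mul_indic_ge0 => _.
have -> : a * a + 2 * a * b * x + b * b * x ^+ 2 = (a + b * x) ^+ 2 by ring.
exact: sqr_ge0.
Qed.

Lemma qdet_moment_eq0 : 0 < moment J 0 -> ~ posdef (Mmat mu J) ->
  qdet (moment J 0) (moment J 1) (moment J 2) = 0.
Proof.
move=> m0_gt0 not_pd; apply/eqP; rewrite eq_le qdet_ge0 ?andbT //.
  by rewrite leNgt; apply/negP => det_gt0; apply/not_pd/posdef_MmatP.
exact: qform_moment_ge0.
Qed.

Lemma indic_itv_ae0 : moment J 0 = 0 -> {ae mu, forall x, \1_J x = 0 :> R}.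
Proof.
move=> m0; apply: is_integral0_ae; last by move=> x; rewrite indicE ler0n.
by apply: is_integral_congr (is_integral_monomial 0) _ m0 => x; rewrite mul1r.
Qed.

Lemma moment_null : moment J 0 = 0 -> moment J 1 = 0 /\ moment J 2 = 0.
Proof.
move=> /indic_itv_ae0 J_ae0; split; apply: (is_integral_ae0 (is_integral_monomial _));
  by apply: ae_filterS J_ae0 => x ->; rewrite mulr0.
Qed.

Lemma moment1_ge : c * moment J 0 <= moment J 1.
Proof.
rewrite -subr_ge0; have := is_integral_ge0 (is_integral_quadratic (- c) 1 0).
rewrite mulNr mul1r mul0r addr0 addrC; apply=> x; apply: mul_indic_ge0.
by rewrite /= in_itv /= => /andP[cx _]; lra.
Qed.

(* The mean of mu over [c, e[ lies strictly below e: otherwise (e - x) 1_J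
   would vanish a.e., and with it 1_J. *)
Lemma moment1_lt : 0 < moment J 0 -> moment J 1 < e * moment J 0.
Proof.
move=> m0_gt0; pose f x := (e - x) * \1_J x.
have intf : is_integral f (e * moment J 0 - moment J 1).
  apply: is_integral_congr (is_integral_quadratic e (- 1) 0) _ _; last by ring.
  by move=> x; rewrite /f; ring.
have J_gt0 x : J x -> 0 < e - x by rewrite /= in_itv /= subr_gt0 => /andP[].
have f_ge0 x : 0 <= f x by apply: mul_indic_ge0 => /J_gt0 /ltW.
rewrite -subr_gt0 lt0r (is_integral_ge0 intf f_ge0) andbT.
apply: contraTneq m0_gt0 => f0; rewrite f0 in intf.
rewrite (is_integral_ae0 (is_integral_monomial 0)) ?ltxx //.
apply: ae_filterS (is_integral0_ae intf f_ge0) => x.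
by move=> /(mul_indic_eq0 (fun xJ => lt0r_neq0 (J_gt0 x xJ))) ->; rewrite mulr0.
Qed.
End HalfOpenInterval.

Lemma is_integral_quadratic2 (c1 e1 c2 e2 p0 p1 p2 q0 q1 q2 : R) :
  is_integral (fun x => (p0 + p1 * x + p2 * x ^+ 2) * \1_(`[c1, e1[%classic) x
                      + (q0 + q1 * x + q2 * x ^+ 2) * \1_(`[c2, e2[%classic) x)
    (p0 * moment `[c1, e1[%classic 0 + p1 * moment `[c1, e1[%classic 1
       + p2 * moment `[c1, e1[%classic 2
     + (q0 * moment `[c2, e2[%classic 0 + q1 * moment `[c2, e2[%classic 1
       + q2 * moment `[c2, e2[%classic 2)).
Proof.
apply: is_integral_congr (is_integral_comb 1 (is_integral_quadratic c1 e1 p0 p1 p2)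
  (is_integral_quadratic c2 e2 q0 q1 q2)) _ _; last by rewrite mul1r.
by move=> x; rewrite mul1r.
Qed.

End IntegralValue.

Section DyadicHalves.
Variables (R : realType) (mu : {measure set (measurableTypeR R) -> \bar R}).
Hypothesis mu_lf : locally_finite mu.
Variables n k : int.
Local Notation L := (@Ileft R n k).
Local Notation Rh := (@Iright R n k).
Local Notation mL := (moment mu L).
Local Notation mR := (moment mu Rh).
Local Notation orth := (orth_lin (mL 0) (mL 1) (mL 2) (mR 0) (mR 1) (mR 2)).
Local Notation qsumLR := (qsum (mL 0) (mL 1) (mL 2) (mR 0) (mR 1) (mR 2)).

Definition pwlin (a1 a0 b1 b0 x : R) : R :=
  (a1 * x + a0) * \1_L x + (b1 * x + b0) * \1_Rh x.

Lemma is_integral_halves (p0 p1 p2 q0 q1 q2 : R) :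
  is_integral mu (fun x => (p0 + p1 * x + p2 * x ^+ 2) * \1_L x
                         + (q0 + q1 * x + q2 * x ^+ 2) * \1_Rh x)
    (p0 * mL 0 + p1 * mL 1 + p2 * mL 2 + (q0 * mR 0 + q1 * mR 1 + q2 * mR 2)).
Proof. exact: is_integral_quadratic2. Qed.

Lemma is_integral_pwlin a1 a0 b1 b0 :
  is_integral mu (pwlin a1 a0 b1 b0) (a0 * mL 0 + a1 * mL 1 + b0 * mR 0 + b1 * mR 1).
Proof.
apply: is_integral_congr (is_integral_halves a0 a1 0 b0 b1 0) _ _; last by ring.
by move=> x; rewrite /pwlin; ring.
Qed.

Lemma is_integral_pwlinX a1 a0 b1 b0 : is_integral mu (fun x => pwlin a1 a0 b1 b0 x * x)
  (a0 * mL 1 + a1 * mL 2 + b0 * mR 1 + b1 * mR 2).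
Proof.
apply: is_integral_congr (is_integral_halves 0 a0 a1 0 b0 b1) _ _; last by ring.
by move=> x; rewrite /pwlin; ring.
Qed.

Lemma is_integral_pwlin_sqr a1 a0 b1 b0 :
  is_integral mu (fun x => pwlin a1 a0 b1 b0 x ^+ 2) (qsumLR a0 a1 b0 b1).
Proof.
apply: is_integral_congr (is_integral_halves (a0 * a0) (2 * a0 * a1) (a1 * a1)
  (b0 * b0) (2 * b0 * b1) (b1 * b1)) _ _; last by rewrite /qsum /qform; ring.
move=> x; rewrite /pwlin !indicE.
case: (boolP (x \in L)) => [/set_mem xL | _];
  case: (boolP (x \in Rh)) => [/set_mem xR | _];
  rewrite /= ?mulr0 ?mulr1; try ring.
by move: xL xR; rewrite /Ileft /Iright /= !in_itv /= => /andP[_ xM] /andP[Mx _]; lra.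
Qed.

Lemma pwlin_ae0P a1 a0 b1 b0 :
  {ae mu, forall x, pwlin a1 a0 b1 b0 x = 0} <-> qsumLR a0 a1 b0 b1 = 0.
Proof.
have intf := is_integral_pwlin_sqr a1 a0 b1 b0.
split=> [f_ae0 | q0].
  by apply: (is_integral_ae0 intf); apply: ae_filterS f_ae0 => x ->; rewrite expr0n.
rewrite q0 in intf; apply: ae_filterS (is_integral0_ae intf (fun x => sqr_ge0 _)) => x.
by move/eqP; rewrite sqrf_eq0 => /eqP.
Qed.

Lemma L2I2_pwlin a1 a0 b1 b0 :
  L2I2 mu n k (pwlin a1 a0 b1 b0) <-> orth a0 a1 b0 b1.
Proof.
rewrite /L2I2 (is_integral_pwlin a1 a0 b1 b0).2 (is_integral_pwlinX a1 a0 b1 b0).2.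
split=> [[_ [[e1] [e2]]] | [e1 e2]]; first by split.
by rewrite e1 e2; split=> //; exists a1, a0, b1, b0.
Qed.

Lemma L2I2E f : L2I2 mu n k f ->
  exists a1 a0 b1 b0, f = pwlin a1 a0 b1 b0 /\ orth a0 a1 b0 b1.
Proof.
move=> Lf; have [[a1 [a0 [b1 [b0 fE]]]] _] := Lf.
by exists a1, a0, b1, b0; rewrite -L2I2_pwlin -[pwlin _ _ _ _]fE.
Qed.

Lemma L2I2_zero_of_orth :
  (forall a0 a1 b0 b1, orth a0 a1 b0 b1 -> qsumLR a0 a1 b0 b1 = 0) -> L2I2_zero mu n k.
Proof. by move=> null f /L2I2E [a1 [a0 [b1 [b0 [-> /null /pwlin_ae0P]]]]]. Qed.

Lemma L2I2_dim1_of_span g0 g1 h0 h1 : orth g0 g1 h0 h1 -> qsumLR g0 g1 h0 h1 != 0 ->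
  (forall a0 a1 b0 b1, orth a0 a1 b0 b1 -> exists c,
     qsumLR (a0 - c * g0) (a1 - c * g1) (b0 - c * h0) (b1 - c * h1) = 0) ->
  L2I2_dim1 mu n k.
Proof.
move=> orth_g g_neq0 span; exists (pwlin g1 g0 h1 h0); split; first exact/L2I2_pwlin.
split=> [/pwlin_ae0P g_null | f /L2I2E [a1 [a0 [b1 [b0 [-> /span [c]]]]]]].
  by rewrite g_null eqxx in g_neq0.
move=> /pwlin_ae0P fc_ae0; exists c; apply: ae_filterS fc_ae0 => x fc0.
by apply/eqP; rewrite -subr_eq0; apply/eqP; rewrite -[RHS]fc0 /pwlin; ring.
Qed.

Lemma case1_dim1 : case1 mu n k -> L2I2_dim1 mu n k.
Proof.
move=> [muL_gt0 [muR_gt0 pd_det]].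
(* Restated at L and Rh, so that lra sees the atoms of the goal. *)
have mL_gt0 : 0 < mL 0 := (moment0_gt0 mu_lf _ _).1 muL_gt0.
have mR_gt0 : 0 < mR 0 := (moment0_gt0 mu_lf _ _).1 muR_gt0.
have qL_ge0 a b : 0 <= qform (mL 0) (mL 1) (mL 2) a b := qform_moment_ge0 mu_lf _ _ a b.
have qR_ge0 a b : 0 <= qform (mR 0) (mR 1) (mR 2) a b := qform_moment_ge0 mu_lf _ _ a b.
case: pd_det => -[/posdef_MmatP [_ det_gt0]]; rewrite det_Mmat => det0.
  have [g0 [g1 [orth_g span]]] := orth_span_rank1_right (lt0r_neq0 det_gt0) mR_gt0 det0.
  apply: (L2I2_dim1_of_span orth_g _ span); apply: lt0r_neq0.
  by apply: ltr_wpDl (qL_ge0 _ _) _; rewrite /qform; lra.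
have [g0 [g1 [orth_g span]]] := orth_span_rank1_right (lt0r_neq0 det_gt0) mL_gt0 det0.
apply: (@L2I2_dim1_of_span 1 0 g0 g1); first exact/orth_linC.
  apply: lt0r_neq0; rewrite /qsum addrC.
  by apply: ltr_wpDl (qR_ge0 _ _) _; rewrite /qform; lra.
move=> a0 a1 b0 b1 /orth_linC /span [c qc]; exists c.
by rewrite /qsum addrC.
Qed.

Lemma moment1_halves_lt : 0 < mL 0 -> 0 < mR 0 -> mL 1 * mR 0 < mR 1 * mL 0.
Proof.
move=> mL_gt0 mR_gt0.
have lt : mL 1 < dyM R n k * mL 0 := moment1_lt mu_lf mL_gt0.
have ge : dyM R n k * mR 0 <= mR 1 := moment1_ge mu_lf _ _.
nra.
Qed.

Lemma not_case1_zero : ~ case1 mu n k ->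
  ~ posdef (Mmat mu L) \/ ~ posdef (Mmat mu Rh) -> L2I2_zero mu n k.
Proof.
move=> not_case1 not_pd; apply: L2I2_zero_of_orth.
have [mL0 | mL_neq0] := eqVneq (mL 0) 0.
  have [mL1 mL2] : mL 1 = 0 /\ mL 2 = 0 := moment_null mu_lf mL0.
  by rewrite mL0 mL1 mL2 => a0 a1 b0 b1; exact: orth_null_left.
have [mR0 | mR_neq0] := eqVneq (mR 0) 0.
  have [mR1 mR2] : mR 1 = 0 /\ mR 2 = 0 := moment_null mu_lf mR0.
  rewrite mR0 mR1 mR2 => a0 a1 b0 b1 /orth_linC /orth_null_left.
  by rewrite /qsum addrC.
have mL_gt0 : 0 < mL 0 by rewrite lt0r mL_neq0 moment0_ge0.
have mR_gt0 : 0 < mR 0 by rewrite lt0r mR_neq0 moment0_ge0.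
have muL_gt0 : (0 < mu L)%E := (moment0_gt0 mu_lf _ _).2 mL_gt0.
have muR_gt0 : (0 < mu Rh)%E := (moment0_gt0 mu_lf _ _).2 mR_gt0.
have detL0 : ~ posdef (Mmat mu L) -> qdet (mL 0) (mL 1) (mL 2) = 0 :=
  qdet_moment_eq0 mu_lf mL_gt0.
have detR0 : ~ posdef (Mmat mu Rh) -> qdet (mR 0) (mR 1) (mR 2) = 0 :=
  qdet_moment_eq0 mu_lf mR_gt0.
have [dL dR] : qdet (mL 0) (mL 1) (mL 2) = 0 /\ qdet (mR 0) (mR 1) (mR 2) = 0.
  case: not_pd => [/detL0 dL | /detR0 dR]; split=> //.
    apply: detR0 => pdR; apply: not_case1; split=> //; split=> //.
    by right; rewrite det_Mmat.
  apply: detL0 => pdL; apply: not_case1; split=> //; split=> //.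
  by left; rewrite det_Mmat.
by move=> a0 a1 b0 b1; apply: orth_rank1_both => //; exact: moment1_halves_lt.
Qed.

End DyadicHalves.

Theorem lemma2 (R : realType) (mu : {measure set (measurableTypeR R) -> \bar R})
  (n k : int) :
  locally_finite mu ->
  (case1 mu n k -> L2I2_dim1 mu n k) /\
  (~ case1 mu n k ->
     (~ posdef (Mmat mu (@Ileft R n k)) \/ ~ posdef (Mmat mu (@Iright R n k))) ->
     L2I2_zero mu n k).
Proof. by move=> mu_lf; split; [exact: case1_dim1 | exact: not_case1_zero]. Qed.
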